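(* Under the hypotheses and notation of the dual rate result (Assumption 1, Algorithm (DG) started at $\lambda^0\in\mathbb D$, $\bar\kappa$ an error-bound constant valid on $\{\lambda\in\mathbb D:\mathcal T(\lambda)\le\mathcal T(\lambda^0)\}$, $\rho=\frac{4(1+\bar\kappa)}{1+4(1+\bar\kappa)}$), for all $k\ge1$, \[ \big\|[Gz^k-g]_{\mathbb D}\big\|_{W^{-1}}\le \rho^{\frac{k-2}{2}}\,\mathcal R(\lambda^0). \]
   Context: Standing setup. Consider $\min_{z}\ f(z)=\sum_{i=1}^M f_i(z_i)$ subject to $Az=b$, $Cz\le c$, where $z=(z_1,\dots,z_M)$, $z_i\in\mathbb{R}^{n_i}$, $n=\sum_i n_i$, $A\in\mathbb{R}^{p\times n}$, $C\in\mathbb{R}^{q\times n}$, $b\in\mathbb{R}^p$, $c\in\mathbb{R}^q$, and each $f_i:\mathbb{R}^{n_i}\to\mathbb{R}$ is convex. The rows are partitioned into $\bar M$ blocks: $A$ has blocks $A_{ji}\in\mathbb{R}^{p_j\times n_i}$ and $C$ has blocks $C_{ji}\in\mathbb{R}^{q_j\times n_i}$. A matrix $E\in\{0,1\}^{\bar M\times M}$ is given such that $E_{ji}=0$ implies $A_{ji}=0$ and $C_{ji}=0$; $\bar{\mathcal N}_i=\{j: E_{ji}\neq 0\}$, $\mathcal N_j=\{i:E_{ji}\ne 0\}$. Let $G=\begin{bmatrix}A\\ C\end{bmatrix}$, $g=\begin{bmatrix}b\\ c\end{bmatrix}$, $\lambda=(\nu,\mu)$, $\mathbb{D}=\mathbb{R}^p\times\mathbb{R}^q_+$,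 $\mathcal L(z,\lambda)=f(z)+\langle\lambda,Gz-g\rangle$, $d(\lambda)=\min_{z}\mathcal L(z,\lambda)$, $\nabla d(\lambda)=Gz(\lambda)-g$ with $z(\lambda)$ the unique minimizer of $\mathcal L(\cdot,\lambda)$. $L_{d_i}=\big\|\begin{bmatrix}[A_{ji}]_{j\in\bar{\mathcal N}_i}\\ [C_{ji}]_{j\in\bar{\mathcal N}_i}\end{bmatrix}\big\|^2/\sigma_i$; $W=\mathrm{diag}(W_\nu,W_\mu)$, $W_\nu=\mathrm{diag}\big(\sum_{i\in\mathcal N_j}L_{d_i}I_{p_j};\ j\big)$, $W_\mu=\mathrm{diag}\big(\sum_{i\in\mathcal N_j}L_{d_i}I_{q_j};\ j\big)$, assumed positive definite; $\|x\|_W=\sqrt{x^TWx}$, $\|x\|_{W^{-1}}=\sqrt{x^TW^{-1}x}$. Assumption 1: (a) each $f_i$ is $\sigma_i$-strongly convex and has $L_i$-Lipschitz gradient; (b) $A$ has full row rank and there is $\tilde z$ with $A\tilde z=b$, $C\tilde z<c$. Then the set $\Lambda^*$ of maximizers of $d$ over $\mathbb D$ is nonempty and bounded, and $\max_{\mathbb D}d=f^*$. $[x]^W_S$ is the $\|\cdot\|_W$-projection onto $S$; $[x]_{\mathbb D}$ is the Euclidean projection onto $\mathbb D$ (first $p$ coordinates unchanged, positive part of last $q$). $\nabla^+ d(\lambda)=[\lambda+W^{-1}\nabla d(\lambda)]^W_{\mathbb D}-\lambda$. $\mathcal R(\lambda)=\min_{\lambda^*\in\Lambda^*}\|\lambda^*-\lambda\|_W$,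 $\mathcal T(\lambda)=\max_{\lambda^*\in\Lambda^*}\|\lambda-\lambda^*\|_W$. $\bar\kappa$ is a constant with $\|\lambda-[\lambda]^W_{\Lambda^*}\|_W\le\bar\kappa\|\nabla^+d(\lambda)\|_W$ for all $\lambda\in\mathbb D$ with $\mathcal T(\lambda)\le\mathcal T(\lambda^0)$. Algorithm (DG): given $\lambda^0\in\mathbb D$, for $k\ge0$ set $z^k=\arg\min_{z}\mathcal L(z,\lambda^k)$ and $\lambda^{k+1}=[\lambda^k+W^{-1}\nabla d(\lambda^k)]_{\mathbb D}$. *)

(* Stdlib Reals.  Vectors are functions nat -> R, only the first
   (dimension) coordinates are meaningful; matrices are nat -> nat -> R. *)
From Stdlib Require Import Reals Lra Lia.
Open Scope R_scope.

Fixpoint fsum (k : nat) (f : nat -> R) : R :=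
  match k with O => 0 | S k' => fsum k' f + f k' end.

Definition vadd (x y : nat -> R) : nat -> R := fun r => x r + y r.
Definition vsub (x y : nat -> R) : nat -> R := fun r => x r - y r.
Definition vscal (a : R) (x : nat -> R) : nat -> R := fun r => a * x r.

Definition is_max (S : R -> Prop) (v : R) : Prop := S v /\ forall w, S w -> w <= v.
Definition is_min (S : R -> Prop) (v : R) : Prop := S v /\ forall w, S w -> v <= w.

Section Problem.
(* n = dim z ; p = #equality rows ; q = #inequality rows ;
   M = #variable blocks ; Mbar = #row blocks.
   blk c      : variable block (< M) of coordinate c < n   (z_i = coords with blk = i)
   rA r, rC r : row block (< Mbar) of row r of A, resp. C *)
Variables (n p q M : nat) (blk rA rC : nat -> nat) (E : nat -> nat -> bool)
          (A C : nat -> nat -> R) (b c : nat -> R) (Ld : nat -> R).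

Definition normsq_blk (i : nat) (x : nat -> R) : R :=
  fsum n (fun col => if Nat.eqb (blk col) i then x col ^ 2 else 0).

Definition sameblk (i : nat) (x y : nat -> R) : Prop :=
  forall col, (col < n)%nat -> blk col = i -> x col = y col.

(* G = [A; C], g = [b; c]; row r < p is row r of A, row p + r' is row r' of C *)
Definition Gm (r col : nat) : R := if Nat.ltb r p then A r col else C (r - p)%nat col.
Definition gv (r : nat) : R := if Nat.ltb r p then b r else c (r - p)%nat.
Definition rowblk (r : nat) : nat := if Nat.ltb r p then rA r else rC (r - p)%nat.

Definition Gz (z : nat -> R) : nat -> R := fun r => fsum n (fun col => Gm r col * z col).
(* nabla d at the minimizer z : G z - g *)
Definition resid (z : nat -> R) : nat -> R := fun r => Gz z r - gv r.

(* the set { ||B_i x||^2 : ||x_i|| <= 1 }, B_i = [[A_ji]_{j in Nbar_i}; [C_ji]_{j in Nbar_i}] *)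
Definition opnorm_set (i : nat) (y : R) : Prop :=
  exists x : nat -> R, normsq_blk i x <= 1 /\
    y = fsum (p + q) (fun r => if E (rowblk r) i
          then (fsum n (fun col => if Nat.eqb (blk col) i then Gm r col * x col else 0)) ^ 2
          else 0).

(* diagonal of W : the row r in row block j gets sum_{i in N_j} L_{d_i} *)
Definition Wd (r : nat) : R := fsum M (fun i => if E (rowblk r) i then Ld i else 0).

Definition normW (x : nat -> R) : R := sqrt (fsum (p + q) (fun r => Wd r * x r ^ 2)).
Definition normWinv (x : nat -> R) : R := sqrt (fsum (p + q) (fun r => x r ^ 2 / Wd r)).
Definition Winv (x : nat -> R) : nat -> R := fun r => x r / Wd r.

Definition inD (l : nat -> R) : Prop := forall r, (p <= r < p + q)%nat -> 0 <= l r.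
Definition projD (l : nat -> R) : nat -> R :=
  fun r => if Nat.ltb r p then l r else Rmax 0 (l r).

Definition isWproj (S : (nat -> R) -> Prop) (x y : nat -> R) : Prop :=
  S y /\ forall y', S y' -> normW (vsub x y) <= normW (vsub x y').

Variable f : nat -> (nat -> R) -> R.   (* f i = f_i, acting on the block z_i *)

Definition fsep (z : nat -> R) : R := fsum M (fun i => f i z).
Definition lagr (z l : nat -> R) : R := fsep z + fsum (p + q) (fun r => l r * resid z r).
Definition argminL (l z : nat -> R) : Prop := forall z', lagr z l <= lagr z' l.
Definition dval (l : nat -> R) (v : R) : Prop :=
  (exists z, lagr z l = v) /\ forall z, v <= lagr z l.
Definition inLstar (ls : nat -> R) : Prop :=
  inD ls /\ exists v, dval ls v /\ forall l w, inD l -> dval l w -> w <= v.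
(* set of W-distances from l to Lambda* ; R(l) = min, T(l) = max of this set *)
Definition distLstar (l : nat -> R) (v : R) : Prop :=
  exists ls, inLstar ls /\ v = normW (vsub ls l).

End Problem.

(* Each step of (DG) is a projected gradient step for the concave dual d in the
   W-geometry.  The constants L_{d_i} are chosen so that ||G v||^2_{W^-1} is at most
   sum_i sigma_i ||v_i||^2, and sigma-strong convexity of the Lagrangian then yields the
   descent lemma d(l') >= d(l) + <grad d(l), l' - l> - 1/2 ||l' - l||_W^2.  Together with
   the variational inequality of the projection onto D this gives the ascent
   d(l^{k+1}) >= d(l^k) + 1/2 ||l^{k+1} - l^k||_W^2 and, for every l* in Lambda*,
     f* - d(l^{k+1}) <= 1/2 (||l* - l^k||_W^2 - ||l* - l^{k+1}||_W^2).
   The latter makes the iterates Fejer monotone, so the error bound applies along the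
   whole trajectory, and combining the three inequalities gives
   f* - d(l^{k+1}) <= rho (f* - d(l^k)).  Finally the projected residual satisfies
   ||[G z^k - g]_D||^2_{W^-1} <= ||l^{k+1} - l^k||_W^2 <= 2 (f* - d(l^k))
   <= rho^{k-1} R(l^0)^2.  The maxima T(.) and W-projections onto Lambda* that the
   error-bound hypothesis refers to exist because Lambda* is closed and, by the Slater
   point and the full row rank of A, bounded. *)

From Stdlib Require Import Reals Lra Lia Psatz.
From Stdlib Require Import FunctionalExtensionality IndefiniteDescription Classical.
From mathcomp Require all_boot all_order all_algebra Rstruct.

Module FullRowRank.
Import all_boot all_order all_algebra Rstruct.
Import GRing.Theory.
Local Open Scope ring_scope.

Lemma fsum_big (k : nat) (F : nat -> R) : fsum k F = \sum_(i < k) F i.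
Proof.
elim: k => [|k IH] /=; first by rewrite big_ord0.
by rewrite big_ord_recr /= IH.
Qed.

(* A row-free matrix has a right inverse, so [A h = e_r] is solvable. *)
Lemma indep_rows_hit_unit (p n : nat) (A : nat -> nat -> R) :
  (forall nu : nat -> R,
     (forall col, (col < n)%coq_nat -> fsum p (fun r => Rmult (nu r) (A r col)) = IZR 0) ->
     forall r, (r < p)%coq_nat -> nu r = IZR 0) ->
  forall r, (r < p)%coq_nat -> exists h : nat -> R, forall s, (s < p)%coq_nat ->
    fsum n (fun col => Rmult (A s col) (h col)) = if Nat.eqb s r then IZR 1 else IZR 0.
Proof.
move=> Hrank r /ltP Hr.
pose Am : 'M[R]_(p, n) := \matrix_(i, j) A i j.
have /row_freeP [B HB] : row_free Am.
  apply: inj_row_free => v Hv; apply/rowP => i; rewrite mxE.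
  pose nu r := if insub r is Some j then v ord0 j else 0.
  suff /(_ i (ltP (ltn_ord i))) : forall r, (r < p)%coq_nat -> nu r = 0 by rewrite /nu valK.
  apply: Hrank => col /ltP Hc.
  have := congr1 (fun N : 'M[R]_(1, n) => N ord0 (Ordinal Hc)) Hv.
  rewrite !mxE fsum_big => HvE; rewrite -[X in _ = X]HvE.
  by apply: eq_bigr => j _; rewrite /nu valK mxE.
exists (fun col => if insub col is Some j then B j (Ordinal Hr) else 0) => s /ltP Hs.
have := congr1 (fun N : 'M[R]_(p, p) => N (Ordinal Hs) (Ordinal Hr)) HB.
rewrite !mxE fsum_big => HsB.
transitivity (\sum_j Am (Ordinal Hs) j * B j (Ordinal Hr)).
  by apply: eq_bigr => j _; rewrite valK mxE.
rewrite HsB; case: (Nat.eqb_spec s r) => [Esr | Nsr].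
  by rewrite (_ : Ordinal Hs = Ordinal Hr) ?eqxx //; apply: val_inj.
by rewrite (_ : (Ordinal Hs == Ordinal Hr) = false) //; apply/negbTE/negP => /eqP [].
Qed.
End FullRowRank.

Open Scope R_scope.

(** * Finite sums and elementary inequalities *)

Lemma fsum_ext k F G : (forall i, (i < k)%nat -> F i = G i) -> fsum k F = fsum k G.
Proof.
  induction k as [|k IH]; intros H; simpl; [reflexivity|].
  rewrite IH, H by (lia || (intros; apply H; lia)). reflexivity.
Qed.

Lemma fsum_plus k F G : fsum k (fun i => F i + G i) = fsum k F + fsum k G.
Proof. induction k; simpl; [lra|rewrite IHk; lra]. Qed.

Lemma fsum_minus k F G : fsum k (fun i => F i - G i) = fsum k F - fsum k G.
Proof. induction k; simpl; [lra|rewrite IHk; lra]. Qed.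

Lemma fsum_scal k a F : fsum k (fun i => a * F i) = a * fsum k F.
Proof. induction k; simpl; [lra|rewrite IHk; lra]. Qed.

Lemma fsum_scal_r k a F : fsum k (fun i => F i * a) = fsum k F * a.
Proof. induction k; simpl; [lra|rewrite IHk; lra]. Qed.

Lemma fsum_opp k F : fsum k (fun i => - F i) = - fsum k F.
Proof. induction k; simpl; [lra|rewrite IHk; lra]. Qed.

Lemma fsum_eq0 k F : (forall i, (i < k)%nat -> F i = 0) -> fsum k F = 0.
Proof. induction k; simpl; intros H; [lra|]. rewrite IHk, H by (lia || (intros; apply H; lia)). lra. Qed.

Lemma fsum_le k F G : (forall i, (i < k)%nat -> F i <= G i) -> fsum k F <= fsum k G.
Proof.
  induction k; simpl; intros H; [lra|].
  apply Rplus_le_compat; [apply IHk; intros; apply H|apply H]; lia.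
Qed.

Lemma fsum_nonneg k F : (forall i, (i < k)%nat -> 0 <= F i) -> 0 <= fsum k F.
Proof. intros H. rewrite <- (fsum_eq0 k (fun _ => 0)) by auto. apply fsum_le; auto. Qed.

Lemma fsum_term_le k F j : (forall i, (i < k)%nat -> 0 <= F i) -> (j < k)%nat -> F j <= fsum k F.
Proof.
  induction k; simpl; intros H Hj; [lia|].
  assert (Hk : 0 <= F k) by (apply H; lia).
  destruct (Nat.eq_dec j k) as [->|Hne].
  - assert (0 <= fsum k F) by (apply fsum_nonneg; intros; apply H; lia). lra.
  - assert (F j <= fsum k F) by (apply IHk; [intros; apply H|]; lia). lra.
Qed.

Lemma fsum_swap a b F :
  fsum a (fun i => fsum b (fun j => F i j)) = fsum b (fun j => fsum a (fun i => F i j)).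
Proof.
  induction a; simpl.
  - symmetry. apply fsum_eq0. reflexivity.
  - rewrite IHa, <- fsum_plus. reflexivity.
Qed.

Lemma fsum_app a b F : fsum (a + b) F = fsum a F + fsum b (fun j => F (a + j)%nat).
Proof.
  induction b; simpl.
  - rewrite Nat.add_0_r. ring.
  - rewrite Nat.add_succ_r. simpl. rewrite IHb. ring.
Qed.

Lemma fsum_kronecker k r x : (r < k)%nat ->
  fsum k (fun s => x s * (if Nat.eqb s r then 1 else 0)) = x r.
Proof.
  induction k; intros Hr; [lia|]. simpl. destruct (Nat.eqb_spec k r) as [->|Hne].
  - rewrite fsum_eq0; [ring|]. intros i Hi. destruct (Nat.eqb_spec i r); [lia|ring].
  - rewrite IHk by lia. ring.
Qed.

Lemma fsum_partition M n (blk : nat -> nat) X : (forall c, (c < n)%nat -> (blk c < M)%nat) ->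
  fsum M (fun i => fsum n (fun c => if Nat.eqb (blk c) i then X c else 0)) = fsum n X.
Proof.
  intros Hblk. rewrite fsum_swap. apply fsum_ext. intros c Hc.
  specialize (Hblk c Hc). induction M; simpl; [lia|].
  destruct (Nat.eqb_spec (blk c) M) as [<-|Hne].
  - rewrite fsum_eq0; [ring|]. intros i Hi. destruct (Nat.eqb_spec (blk c) i); [lia|reflexivity].
  - rewrite IHM by lia. ring.
Qed.

Lemma fsum_sq_le_mul k a L c :
  (forall i, (i < k)%nat -> a i ^ 2 <= L i * c i /\ 0 <= L i /\ 0 <= c i) ->
  (fsum k a) ^ 2 <= fsum k L * fsum k c.
Proof.
  induction k; simpl; intros H; [lra|].
  assert (IH : fsum k a ^ 2 <= fsum k L * fsum k c) by (apply IHk; intros; apply H; lia).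
  assert (HL : 0 <= fsum k L) by (apply fsum_nonneg; intros; apply H; lia).
  assert (HC : 0 <= fsum k c) by (apply fsum_nonneg; intros; apply H; lia).
  destruct (H k ltac:(lia)) as [Hk [HLk Hck]].
  set (S := fsum k a) in *. set (SL := fsum k L) in *. set (SC := fsum k c) in *.
  assert (Hcross : 2 * (a k * S) <= L k * SC + SL * c k).
  { assert ((a k * S) ^ 2 <= (L k * c k) * (SL * SC)).
    { replace ((a k * S) ^ 2) with (a k ^ 2 * S ^ 2) by ring. apply Rmult_le_compat; nra. }
    apply Rsqr_incr_0_var; unfold Rsqr; [|nra].
    assert (0 <= (L k * SC - SL * c k) ^ 2) by apply pow2_ge_0. nra. }
  nra.
Qed.

Lemma fsum_cauchy_schwarz k (W x y : nat -> R) : (forall i, (i < k)%nat -> 0 <= W i) ->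
  (fsum k (fun i => W i * x i * y i)) ^ 2
  <= fsum k (fun i => W i * x i ^ 2) * fsum k (fun i => W i * y i ^ 2).
Proof.
  intros HW. apply fsum_sq_le_mul. intros i Hi. specialize (HW i Hi).
  repeat split; [right; ring| |]; apply Rmult_le_pos; auto; apply pow2_ge_0.
Qed.

Lemma young_lb x y w : 0 < w -> - (w * x ^ 2 / 2 + y ^ 2 / w / 2) <= x * y.
Proof.
  intros Hw. assert (0 <= w * (x + y / w) ^ 2) by (apply Rmult_le_pos; [lra|apply pow2_ge_0]).
  assert (w * (x + y / w) ^ 2 = w * x ^ 2 + 2 * x * y + y ^ 2 / w) by (field; lra). nra.
Qed.

Lemma le_of_forall_shrink_le a b : 0 <= b -> (forall t, 0 < t <= 1 -> (1 - t) * b <= a) -> b <= a.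
Proof.
  intros Hb H. destruct (Rle_dec b a) as [|Hlt]; auto. exfalso.
  assert (Ha : 0 <= a) by (specialize (H 1 ltac:(lra)); lra).
  assert (Ht : 0 < (b - a) / (2 * b) <= 1).
  { assert ((b - a) / (2 * b) * (2 * b) = b - a) by (field; lra).
    split; [apply Rdiv_lt_0_compat|]; nra. }
  specialize (H _ Ht). assert ((1 - (b - a) / (2 * b)) * b = (a + b) / 2) by (field; lra). lra.
Qed.

Lemma le_of_pow2_le x K : 0 <= K -> x ^ 2 <= K ^ 2 -> x <= K.
Proof. intros HK H. apply Rsqr_incr_0_var; unfold Rsqr; nra. Qed.

Lemma derive_le_of_quotient_le g D u v :
  derivable_pt_lim g 0 D -> (forall h, 0 < h <= 1 -> (g h - g 0) / h <= u + h * v) -> D <= u.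
Proof.
  intros Hg Hq. destruct (Rle_dec D u) as [|Hlt]; auto. exfalso.
  set (e := (D - u) / 2). assert (He : 0 < e) by (unfold e; lra).
  destruct (Hg e He) as [del Hdel].
  set (h := Rmin (del / 2) (Rmin 1 (e / (Rabs v + 1)))).
  assert (Hav : 0 < Rabs v + 1) by (pose proof (Rabs_pos v); lra).
  assert (Hh0 : 0 < h) by (pose proof (cond_pos del);
    repeat apply Rmin_glb_lt; try apply Rdiv_lt_0_compat; lra).
  assert (Hh1 : h <= 1) by (eapply Rle_trans; [apply Rmin_r|apply Rmin_l]).
  assert (Hhv : h * v < e).
  { assert (Hhe : h <= e / (Rabs v + 1)) by (eapply Rle_trans; [apply Rmin_r|apply Rmin_r]).
    assert (h * v <= h * Rabs v) by (apply Rmult_le_compat_l; [lra|apply RRle_abs]).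
    assert (h * (Rabs v + 1) <= e) by
      (apply (Rmult_le_reg_r (/ (Rabs v + 1))); [apply Rinv_0_lt_compat; lra|];
       rewrite Rmult_assoc, Rinv_r; fold (e / (Rabs v + 1)); lra).
    nra. }
  assert (Hhd : Rabs h < del) by
    (rewrite Rabs_pos_eq by lra; pose proof (cond_pos del); eapply Rle_lt_trans; [apply Rmin_l|lra]).
  specialize (Hdel h ltac:(lra) Hhd). rewrite Rplus_0_l in Hdel.
  apply Rabs_def2 in Hdel. specialize (Hq h (conj Hh0 Hh1)). unfold e in *. lra.
Qed.

Lemma Un_cv_const a : Un_cv (fun _ => a) a.
Proof. intros e He. exists 0%nat. intros. unfold Rdist. rewrite Rminus_diag, Rabs_R0. lra. Qed.

Lemma Un_cv_fsum k (F : nat -> nat -> R) (l : nat -> R) :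
  (forall i, (i < k)%nat -> Un_cv (fun j => F j i) (l i)) ->
  Un_cv (fun j => fsum k (F j)) (fsum k l).
Proof.
  induction k; simpl; intros H; [apply Un_cv_const|].
  apply CV_plus; [apply IHk; intros|]; apply H; lia.
Qed.

Lemma Un_cv_subseq (u : nat -> R) l (phi : nat -> nat) :
  Un_cv u l -> (forall j, (j <= phi j)%nat) -> Un_cv (fun j => u (phi j)) l.
Proof. intros Hu Hphi e He. destruct (Hu e He) as [N HN]. exists N. intros j Hj. apply HN. specialize (Hphi j). lia. Qed.

Lemma inv_INR_S_pos j : 0 < / (INR j + 1).
Proof. apply Rinv_0_lt_compat. pose proof (pos_INR j). lra. Qed.

Lemma inv_INR_S_lt e : 0 < e -> exists N, forall j, (N <= j)%nat -> / (INR j + 1) < e.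
Proof.
  intros He. destruct (RinvN_cv (eps := e) He) as [N HN]. exists N. intros j Hj.
  specialize (HN j Hj). unfold Rdist, RinvN in HN. simpl in HN.
  rewrite Rminus_0_r, Rabs_pos_eq in HN by apply Rlt_le, inv_INR_S_pos. exact HN.
Qed.

Lemma cauchy_of_sq_dist_le (u : nat -> R) K : 0 <= K ->
  (forall j k, (u j - u k) ^ 2 <= K * (/ (INR j + 1) + / (INR k + 1))) -> Cauchy_crit u.
Proof.
  intros HK H e He. assert (Hd : 0 < e ^ 2 / (2 * K + 1)) by (apply Rdiv_lt_0_compat; nra).
  destruct (inv_INR_S_lt _ Hd) as [N HN]. exists N. intros j k Hj Hk. unfold Rdist.
  rewrite <- (Rabs_pos_eq e) by lra. apply Rsqr_lt_abs_0. unfold Rsqr.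
  pose proof (HN k Hk). specialize (HN j Hj). specialize (H j k).
  assert (K * (/ (INR j + 1) + / (INR k + 1)) <= K * (2 * (e ^ 2 / (2 * K + 1))))
    by (apply Rmult_le_compat_l; lra).
  assert (e ^ 2 / (2 * K + 1) * (2 * K + 1) = e ^ 2) by (field; lra).
  nra.
Qed.

Lemma bounded_seq_cv_subseq (s : nat -> R) K : (forall j, Rabs (s j) <= K) ->
  exists psi l, (forall j, (j <= psi j)%nat) /\ Un_cv (fun j => s (psi j)) l.
Proof.
  intros HK. destruct (Bolzano_Weierstrass s (fun x => - K <= x <= K) (compact_P3 (- K) K)) as [l Hl].
  { intros j. specialize (HK j). unfold Rabs in HK. destruct (Rcase_abs (s j)); lra. }
  assert (Hg : forall N j, exists m, (N <= m)%nat /\ Rabs (s m - l) < / (INR j + 1)).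
  { intros N j. destruct (Hl (fun x => Rabs (x - l) < / (INR j + 1)) N) as [m Hm]; [|eauto].
    exists (mkposreal _ (inv_INR_S_pos j)). intros y Hy. exact Hy. }
  set (g' := fun N j => proj1_sig (constructive_indefinite_description _ (Hg N j))).
  assert (Hg' : forall N j, (N <= g' N j)%nat /\ Rabs (s (g' N j) - l) < / (INR j + 1))
    by (intros; unfold g'; destruct constructive_indefinite_description; auto).
  set (psi := fix psi j := match j with O => g' O O | S j' => g' (S (psi j')) (S j') end).
  assert (Hpsi : forall j, (j <= psi j)%nat /\ Rabs (s (psi j) - l) < / (INR j + 1)).
  { induction j; simpl; [split; [lia|apply Hg']|].
    destruct (Hg' (S (psi j)) (S j)). split; [lia|auto]. }
  exists psi, l. split; [apply Hpsi|].
  intros e He. destruct (inv_INR_S_lt e He) as [N HN]. exists N. intros j Hj.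
  destruct (Hpsi j) as [_ Hj']. specialize (HN j Hj). unfold Rdist. lra.
Qed.

Lemma bounded_vec_cv_subseq (m : nat) (u : nat -> nat -> R) (K : nat -> R) :
  (forall j r, (r < m)%nat -> Rabs (u j r) <= K r) ->
  exists phi L, (forall j, (j <= phi j)%nat) /\
    forall r, (r < m)%nat -> Un_cv (fun j => u (phi j) r) (L r).
Proof.
  induction m; intros HK.
  - exists (fun j => j), (fun _ => 0). split; intros; lia.
  - destruct IHm as [phi [L [Hphi HL]]]; [intros; apply HK; lia|].
    destruct (bounded_seq_cv_subseq (fun j => u (phi j) m) (K m)) as [psi [l [Hpsi Hl]]];
      [intros; apply HK; lia|].
    exists (fun j => phi (psi j)), (fun r => if Nat.eqb r m then l else L r). split.
    + intros j. specialize (Hpsi j). specialize (Hphi (psi j)). lia.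
    + intros r Hr. destruct (Nat.eqb_spec r m) as [->|Hne]; [exact Hl|].
      apply (Un_cv_subseq (fun j => u (phi j) r)); [apply HL; lia|exact Hpsi].
Qed.

Lemma closed_bounded_attains_max (m : nat) (P : (nat -> R) -> Prop) (F : (nat -> R) -> R)
    (K : nat -> R) (B : R) :
  (exists x, P x) ->
  (forall x, P x -> forall r, (r < m)%nat -> Rabs (x r) <= K r) ->
  (forall u L, (forall j, P (u j)) ->
     (forall r, (r < m)%nat -> Un_cv (fun j => u j r) (L r)) -> P L) ->
  (forall u L, (forall r, (r < m)%nat -> Un_cv (fun j => u j r) (L r)) ->
     Un_cv (fun j => F (u j)) (F L)) ->
  (forall x, P x -> F x <= B) ->
  exists x, P x /\ forall y, P y -> F y <= F x.
Proof.
  intros [x0 Hx0] HK Hclosed Hcont HB.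
  destruct (completeness (fun y => exists x, P x /\ y = F x)) as [s [Hub Hlub]].
  { exists B. intros y [x [Hx ->]]. auto. }
  { exists (F x0), x0; auto. }
  assert (Happrox : forall j, exists x, P x /\ s - / (INR j + 1) < F x).
  { intros j. apply NNPP. intros Hn. pose proof (inv_INR_S_pos j).
    enough (s <= s - / (INR j + 1)) by lra. apply Hlub.
    intros y [x [Hx ->]]. apply Rnot_lt_le. intros Hlt. apply Hn. eauto. }
  set (u := fun j => proj1_sig (constructive_indefinite_description _ (Happrox j))).
  assert (Hu : forall j, P (u j) /\ s - / (INR j + 1) < F (u j))
    by (intros; unfold u; destruct constructive_indefinite_description; auto).
  destruct (bounded_vec_cv_subseq m u K) as [phi [L [Hphi HL]]]; [intros j r Hr; apply HK; [apply Hu|exact Hr]|].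
  exists L. split; [apply (Hclosed (fun j => u (phi j))); auto; intros; apply Hu|].
  assert (HsL : s <= F L).
  { apply (Rle_cv_lim (Un := fun j => s - RinvN (phi j)) (Vn := fun j => F (u (phi j)))).
    - intros j. simpl. apply Rlt_le, Hu.
    - rewrite <- (Rminus_0_r s) at 1. apply CV_minus; [apply Un_cv_const|].
      apply (Un_cv_subseq (fun j => RinvN j)); [apply RinvN_cv|exact Hphi].
    - apply (Hcont (fun j => u (phi j))). exact HL. }
  intros y Hy. specialize (Hub (F y) (ex_intro _ y (conj Hy eq_refl))). lra.
Qed.

Lemma pow_pred_Rpower_half x k : 0 < x -> (1 <= k)%nat ->
  x ^ (k - 1) = Rpower x ((INR k - 2) / 2) ^ 2 * x.
Proof.
  intros Hx Hk. rewrite <- (Rpower_pow 2) by (unfold Rpower; apply exp_pos).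
  rewrite Rpower_mult. rewrite <- (Rpower_1 x) at 3 by lra.
  rewrite <- Rpower_plus, <- Rpower_pow by lra. f_equal.
  rewrite minus_INR by lia. simpl. field.
Qed.
(** * The dual gradient method *)

Section DualGradient.
Variables (n p q M : nat) (blk rA rC : nat -> nat) (E : nat -> nat -> bool)
  (A C : nat -> nat -> R) (b c : nat -> R)
  (f : nat -> (nat -> R) -> R) (gf : nat -> (nat -> R) -> (nat -> R))
  (sigma Ld : nat -> R).
Hypothesis Hblk : forall col, (col < n)%nat -> (blk col < M)%nat.
Hypothesis Hsig : forall i, (i < M)%nat -> 0 < sigma i.
Hypothesis Hsc : forall i x y t, (i < M)%nat -> 0 <= t <= 1 ->
  f i (vadd (vscal t x) (vscal (1 - t) y))
  <= t * f i x + (1 - t) * f i y - sigma i / 2 * t * (1 - t) * normsq_blk n blk i (vsub x y).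
Hypothesis Hgrad : forall i x d, (i < M)%nat ->
  derivable_pt_lim (fun t => f i (vadd x (vscal t d))) 0
    (fsum n (fun col => if Nat.eqb (blk col) i then gf i x col * d col else 0)).

Local Notation L z l := (lagr n p q M A C b c f z l).
Local Notation rs z := (resid n p A C b c z).

Definition sigma_sqnorm (v : nat -> R) : R := fsum n (fun col => sigma (blk col) * v col ^ 2).

Definition conv_comb (t : R) (x y : nat -> R) : nat -> R := vadd (vscal t x) (vscal (1 - t) y).

Lemma normsq_blk_nonneg i v : 0 <= normsq_blk n blk i v.
Proof. apply fsum_nonneg; intros. destruct (Nat.eqb _ _); [apply pow2_ge_0|lra]. Qed.

Lemma sigma_sqnorm_blocks v : fsum M (fun i => sigma i * normsq_blk n blk i v) = sigma_sqnorm v.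
Proof.
  unfold sigma_sqnorm, normsq_blk. rewrite <- (fsum_partition M n blk (fun col => sigma (blk col) * v col ^ 2)) by auto.
  apply fsum_ext; intros i Hi. rewrite <- fsum_scal. apply fsum_ext; intros col Hc.
  destruct (Nat.eqb_spec (blk col) i); subst; ring.
Qed.

Lemma sigma_sqnorm_coord_le v col : (col < n)%nat -> sigma (blk col) * v col ^ 2 <= sigma_sqnorm v.
Proof.
  intros Hc. apply (fsum_term_le n (fun col => sigma (blk col) * v col ^ 2)); auto.
  intros i Hi. apply Rmult_le_pos; [apply Rlt_le, Hsig, Hblk; auto|apply pow2_ge_0].
Qed.

Lemma sigma_sqnorm_nonneg v : 0 <= sigma_sqnorm v.
Proof.
  apply fsum_nonneg; intros col Hc.
  apply Rmult_le_pos; [apply Rlt_le, Hsig, Hblk; auto|apply pow2_ge_0].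
Qed.

Lemma fsep_strongly_convex x y t : 0 <= t <= 1 ->
  fsep M f (conv_comb t x y)
  <= t * fsep M f x + (1 - t) * fsep M f y - t * (1 - t) / 2 * sigma_sqnorm (vsub x y).
Proof.
  intros Ht. unfold fsep. rewrite <- sigma_sqnorm_blocks.
  assert (H : forall k, (k <= M)%nat ->
    fsum k (fun i => f i (conv_comb t x y))
    <= t * fsum k (fun i => f i x) + (1 - t) * fsum k (fun i => f i y)
       - t * (1 - t) / 2 * fsum k (fun i => sigma i * normsq_blk n blk i (vsub x y))).
  { induction k; simpl; intros Hk; [lra|].
    pose proof (IHk ltac:(lia)). pose proof (Hsc k x y t ltac:(lia) Ht). unfold conv_comb in *. nra. }
  apply H; lia.
Qed.

Lemma resid_conv_comb t x y r : rs (conv_comb t x y) r = t * rs x r + (1 - t) * rs y r.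
Proof.
  unfold resid, Gz, conv_comb, vadd, vscal.
  assert (fsum n (fun col => Gm p A C r col * (t * x col + (1 - t) * y col))
          = t * fsum n (fun col => Gm p A C r col * x col)
            + (1 - t) * fsum n (fun col => Gm p A C r col * y col)).
  { rewrite <- !fsum_scal, <- fsum_plus. apply fsum_ext; intros; ring. }
  lra.
Qed.

Lemma lagr_strongly_convex x y t l : 0 <= t <= 1 ->
  L (conv_comb t x y) l
  <= t * L x l + (1 - t) * L y l - t * (1 - t) / 2 * sigma_sqnorm (vsub x y).
Proof.
  intros Ht. unfold lagr. pose proof (fsep_strongly_convex x y t Ht).
  assert (fsum (p + q) (fun r => l r * rs (conv_comb t x y) r)
          = t * fsum (p + q) (fun r => l r * rs x r) + (1 - t) * fsum (p + q) (fun r => l r * rs y r)).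
  { rewrite <- !fsum_scal, <- fsum_plus. apply fsum_ext; intros. rewrite resid_conv_comb. ring. }
  lra.
Qed.

Lemma lagr_quadratic_growth l z z' : argminL n p q M A C b c f l z ->
  sigma_sqnorm (vsub z' z) / 2 <= L z' l - L z l.
Proof.
  intros Hz. apply le_of_forall_shrink_le; [pose proof (sigma_sqnorm_nonneg (vsub z' z)); lra|].
  intros t Ht. pose proof (lagr_strongly_convex z' z t l ltac:(lra)). pose proof (Hz (conv_comb t z' z)).
  apply (Rmult_le_reg_l t); lra.
Qed.

Lemma f_first_order i x y : (i < M)%nat ->
  f i x + fsum n (fun col => if Nat.eqb (blk col) i then gf i x col * (y col - x col) else 0)
  + sigma i / 2 * normsq_blk n blk i (vsub y x) <= f i y.
Proof.
  intros Hi. set (N := normsq_blk n blk i (vsub y x)).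
  enough (fsum n (fun col => if Nat.eqb (blk col) i then gf i x col * vsub y x col else 0)
          <= f i y - f i x - sigma i / 2 * N) by (unfold vsub in *; lra).
  apply (derive_le_of_quotient_le _ _ _ (sigma i / 2 * N) (Hgrad i x (vsub y x) Hi)).
  intros h Hh.
  replace (vadd x (vscal 0 (vsub y x))) with x
    by (apply functional_extensionality; intros; unfold vadd, vscal; ring).
  replace (vadd x (vscal h (vsub y x))) with (conv_comb h y x)
    by (apply functional_extensionality; intros; unfold conv_comb, vadd, vscal, vsub; ring).
  pose proof (Hsc i y x h Hi ltac:(lra)). fold N in H. unfold conv_comb.
  apply (Rmult_le_reg_l h); [lra|]. unfold Rdiv. rewrite <- Rmult_assoc, Rinv_r_simpl_m by lra. nra.
Qed.

Definition lagr_grad (x l : nat -> R) (col : nat) : R :=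
  gf (blk col) x col + fsum (p + q) (fun r => l r * Gm p A C r col).

Lemma resid_sub y x r : rs y r - rs x r = fsum n (fun col => Gm p A C r col * (y col - x col)).
Proof.
  unfold resid, Gz.
  rewrite (fsum_ext n (fun col => Gm p A C r col * (y col - x col))
                      (fun col => Gm p A C r col * y col - Gm p A C r col * x col)) by (intros; ring).
  rewrite fsum_minus. ring.
Qed.

Lemma lagr_linear_part y x l :
  fsum (p + q) (fun r => l r * rs y r)
  = fsum (p + q) (fun r => l r * rs x r)
    + fsum n (fun col => fsum (p + q) (fun r => l r * Gm p A C r col) * (y col - x col)).
Proof.
  enough (fsum (p + q) (fun r => l r * (rs y r - rs x r))
          = fsum n (fun col => fsum (p + q) (fun r => l r * Gm p A C r col) * (y col - x col))).
  { rewrite (fsum_ext _ _ (fun r => l r * rs x r + l r * (rs y r - rs x r))) by (intros; ring).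
    rewrite fsum_plus. lra. }
  rewrite (fsum_ext _ _ (fun r => fsum n (fun col => l r * Gm p A C r col * (y col - x col))))
    by (intros; rewrite resid_sub, <- fsum_scal; apply fsum_ext; intros; ring).
  rewrite fsum_swap. apply fsum_ext; intros col Hc.
  rewrite Rmult_comm, <- fsum_scal. apply fsum_ext; intros; ring.
Qed.

Lemma lagr_first_order x y l :
  L x l + fsum n (fun col => lagr_grad x l col * (y col - x col)) + sigma_sqnorm (vsub y x) / 2 <= L y l.
Proof.
  unfold lagr, fsep. rewrite (lagr_linear_part y x l).
  assert (Hf : fsum M (fun i => f i x
                 + fsum n (fun col => if Nat.eqb (blk col) i then gf i x col * (y col - x col) else 0)
                 + sigma i / 2 * normsq_blk n blk i (vsub y x)) <= fsum M (fun i => f i y))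
    by (apply fsum_le; intros; apply f_first_order; auto).
  rewrite !fsum_plus in Hf.
  assert (Hgf : fsum M (fun i => fsum n (fun col =>
                  if Nat.eqb (blk col) i then gf i x col * (y col - x col) else 0))
                = fsum n (fun col => gf (blk col) x col * (y col - x col))).
  { rewrite <- (fsum_partition M n blk (fun col => gf (blk col) x col * (y col - x col))) by auto.
    apply fsum_ext; intros i Hi; apply fsum_ext; intros col Hc.
    destruct (Nat.eqb_spec (blk col) i); subst; reflexivity. }
  assert (Hsq : fsum M (fun i => sigma i / 2 * normsq_blk n blk i (vsub y x))
                = sigma_sqnorm (vsub y x) / 2).
  { rewrite <- sigma_sqnorm_blocks. unfold Rdiv. rewrite Rmult_comm, <- fsum_scal.
    apply fsum_ext; intros; ring. }
  rewrite Hgf, Hsq in Hf. unfold lagr_grad.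
  rewrite (fsum_ext n _ (fun col => gf (blk col) x col * (y col - x col)
             + fsum (p + q) (fun r => l r * Gm p A C r col) * (y col - x col))) by (intros; ring).
  rewrite fsum_plus. lra.
Qed.

Lemma lagr_bounded_below l : exists LB, forall z, LB <= L z l.
Proof.
  set (z0 := fun _ : nat => 0).
  exists (L z0 l - fsum n (fun col => lagr_grad z0 l col ^ 2 / sigma (blk col) / 2)).
  intros z. pose proof (lagr_first_order z0 z l) as Hfo.
  enough (- fsum n (fun col => lagr_grad z0 l col ^ 2 / sigma (blk col) / 2)
          <= fsum n (fun col => lagr_grad z0 l col * (z col - z0 col)) + sigma_sqnorm (vsub z z0) / 2)
    by lra.
  unfold sigma_sqnorm, Rdiv. rewrite <- fsum_scal_r, <- fsum_opp, <- fsum_plus.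
  apply fsum_le; intros col Hc.
  pose proof (young_lb (z col) (lagr_grad z0 l col) _ (Hsig _ (Hblk col Hc))).
  unfold vsub, z0, Rdiv in *. rewrite Rminus_0_r. lra.
Qed.


Lemma lagr_minimizing_seq_cv l m zs : (forall z, m <= L z l) ->
  (forall j, L (zs j) l < m + / (INR j + 1)) -> exists z, argminL n p q M A C b c f l z.
Proof.
  intros Hm Hzs.
  (* strong convexity at the midpoint makes a minimizing sequence Cauchy *)
  assert (Hdist : forall j k, sigma_sqnorm (vsub (zs j) (zs k)) <= 4 * (/ (INR j + 1) + / (INR k + 1))).
  { intros j k. pose proof (lagr_strongly_convex (zs j) (zs k) (1/2) l ltac:(lra)).
    pose proof (Hm (conv_comb (1/2) (zs j) (zs k))). pose proof (Hzs j). pose proof (Hzs k). nra. }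
  assert (Hcau : forall col, (col < n)%nat -> Cauchy_crit (fun j => zs j col)).
  { intros col Hc. pose proof (Hsig _ (Hblk col Hc)) as Hs.
    apply (cauchy_of_sq_dist_le _ (4 / sigma (blk col))); [apply Rlt_le, Rdiv_lt_0_compat; lra|].
    intros j k. pose proof (sigma_sqnorm_coord_le (vsub (zs j) (zs k)) col Hc). specialize (Hdist j k).
    set (e := / (INR j + 1) + / (INR k + 1)) in *. unfold vsub in *.
    apply (Rmult_le_reg_l (sigma (blk col))); [lra|].
    replace (sigma (blk col) * (4 / sigma (blk col) * e)) with (4 * e) by (field; lra).
    lra. }
  set (zinf := fun col => match Compare_dec.lt_dec col n with
                 | left H => proj1_sig (R_complete _ (Hcau col H)) | right _ => 0 end).
  assert (Hcv : forall col, (col < n)%nat -> Un_cv (fun j => zs j col) (zinf col)).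
  { intros col Hc. unfold zinf. destruct (Compare_dec.lt_dec col n); [|lia].
    destruct R_complete; auto. }
  exists zinf. intros z'. apply Rle_trans with m; auto.
  apply (Rle_cv_lim (Un := fun j => L zinf l + fsum n (fun col => lagr_grad zinf l col * (zs j col - zinf col)))
                    (Vn := fun j => m + RinvN j)).
  - intros j. pose proof (lagr_first_order zinf (zs j) l). pose proof (sigma_sqnorm_nonneg (vsub (zs j) zinf)).
    pose proof (Hzs j). simpl. lra.
  - rewrite <- (Rplus_0_r (L zinf l)) at 1. apply CV_plus; [apply Un_cv_const|].
    rewrite <- (fsum_eq0 n (fun col => lagr_grad zinf l col * (zinf col - zinf col))) by (intros; ring).
    apply Un_cv_fsum. intros col Hc. apply CV_mult; [apply Un_cv_const|].
    apply CV_minus; [apply Hcv; auto|apply Un_cv_const].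
  - rewrite <- (Rplus_0_r m) at 1. apply CV_plus; [apply Un_cv_const|apply RinvN_cv].
Qed.

Lemma argminL_exists l : exists z, argminL n p q M A C b c f l z.
Proof.
  destruct (lagr_bounded_below l) as [LB HLB].
  destruct (completeness (fun y => exists z, y = - L z l)) as [s [Hub Hlub]].
  { exists (- LB). intros y [z ->]. specialize (HLB z). lra. }
  { exists (- L (fun _ => 0) l), (fun _ => 0). reflexivity. }
  assert (Hm : forall z, - s <= L z l) by (intros z; specialize (Hub _ (ex_intro _ z eq_refl)); lra).
  assert (Happrox : forall j, exists z, L z l < - s + / (INR j + 1)).
  { intros j. apply NNPP. intros Hn. pose proof (inv_INR_S_pos j).
    enough (s <= s - / (INR j + 1)) by lra. apply Hlub.
    intros y [z ->]. apply Rnot_lt_le. intros Hlt. apply Hn. exists z. lra. }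
  apply (lagr_minimizing_seq_cv l (- s) (fun j => proj1_sig (constructive_indefinite_description _ (Happrox j))));
    [exact Hm|].
  intros j. destruct constructive_indefinite_description; auto.
Qed.

(** ** Smoothness of the dual function *)

Hypothesis HEA : forall r col, (r < p)%nat -> (col < n)%nat ->
  E (rA r) (blk col) = false -> A r col = 0.
Hypothesis HEC : forall r col, (r < q)%nat -> (col < n)%nat ->
  E (rC r) (blk col) = false -> C r col = 0.
Hypothesis HLd : forall i, (i < M)%nat -> is_lub (opnorm_set n p q blk rA rC E A C i) (Ld i * sigma i).
Hypothesis HW : forall r, (r < p + q)%nat -> 0 < Wd p M rA rC E Ld r.

Local Notation Wr := (Wd p M rA rC E Ld).

Definition block_row (v : nat -> R) (r i : nat) : R :=
  fsum n (fun col => if Nat.eqb (blk col) i then Gm p A C r col * v col else 0).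

(* [||B_i v_i||^2]; [opnorm_set i] is the image of the unit ball under [block_energy ^~ i] *)
Definition block_energy (v : nat -> R) (i : nat) : R :=
  fsum (p + q) (fun r => if E (rowblk p rA rC r) i then block_row v r i ^ 2 else 0).

Lemma Gm_off_pattern r col : (r < p + q)%nat -> (col < n)%nat ->
  E (rowblk p rA rC r) (blk col) = false -> Gm p A C r col = 0.
Proof.
  intros Hr Hc HE. unfold Gm, rowblk in *. destruct (Nat.ltb_spec r p).
  - apply HEA; auto.
  - apply HEC; auto; lia.
Qed.

Lemma block_row_off_pattern v r i : (r < p + q)%nat -> E (rowblk p rA rC r) i = false ->
  block_row v r i = 0.
Proof.
  intros Hr HE. apply fsum_eq0; intros col Hc.
  destruct (Nat.eqb_spec (blk col) i) as [<-|]; [rewrite (Gm_off_pattern r col Hr Hc HE)|]; ring.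
Qed.

Lemma Gz_sum_block_rows v r : Gz n p A C v r = fsum M (block_row v r).
Proof. unfold Gz, block_row. rewrite fsum_partition; auto. Qed.

Lemma block_energy_scal a v i : block_energy (vscal a v) i = a ^ 2 * block_energy v i.
Proof.
  unfold block_energy, block_row, vscal. rewrite <- fsum_scal. apply fsum_ext; intros r Hr.
  destruct (E _ i); [|ring]. rewrite <- Rpow_mult_distr, <- fsum_scal. f_equal.
  apply fsum_ext; intros. destruct (Nat.eqb _ _); ring.
Qed.

Lemma normsq_blk_scal a v i : normsq_blk n blk i (vscal a v) = a ^ 2 * normsq_blk n blk i v.
Proof.
  unfold normsq_blk, vscal. rewrite <- fsum_scal. apply fsum_ext; intros. destruct (Nat.eqb _ _); ring.
Qed.

Lemma block_row_normsq0 v r i : normsq_blk n blk i v = 0 -> block_row v r i = 0.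
Proof.
  intros HN. apply fsum_eq0; intros col Hc. destruct (Nat.eqb_spec (blk col) i) as [Hb|]; [|ring].
  assert (v col ^ 2 <= 0).
  { rewrite <- HN. unfold normsq_blk.
    replace (v col ^ 2) with (if Nat.eqb (blk col) i then v col ^ 2 else 0)
      by (rewrite Hb, Nat.eqb_refl; reflexivity).
    apply (fsum_term_le n (fun col => if Nat.eqb (blk col) i then v col ^ 2 else 0)); auto.
    intros; destruct (Nat.eqb _ _); [apply pow2_ge_0|lra]. }
  assert (v col = 0) by nra. rewrite H0. ring.
Qed.

Lemma block_energy_le v i : (i < M)%nat -> block_energy v i <= Ld i * sigma i * normsq_blk n blk i v.
Proof.
  intros Hi. pose proof (normsq_blk_nonneg i v) as HN0.
  destruct (Req_dec (normsq_blk n blk i v) 0) as [HN|HN].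
  - rewrite HN, Rmult_0_r. right. apply fsum_eq0; intros r Hr.
    rewrite block_row_normsq0 by exact HN. destruct (E _ _); ring.
  - set (s := / sqrt (normsq_blk n blk i v)).
    assert (Hs2 : s ^ 2 * normsq_blk n blk i v = 1).
    { unfold s. rewrite pow_inv, pow2_sqrt by lra. field. exact HN. }
    assert (Hunit : opnorm_set n p q blk rA rC E A C i (block_energy (vscal s v) i)).
    { exists (vscal s v). split; [rewrite normsq_blk_scal; lra|reflexivity]. }
    destruct (HLd i Hi) as [Hub _]. specialize (Hub _ Hunit). rewrite block_energy_scal in Hub.
    apply (Rmult_le_reg_l (s ^ 2)); [apply pow_lt, Rinv_0_lt_compat, sqrt_lt_R0; lra|].
    replace (s ^ 2 * (Ld i * sigma i * normsq_blk n blk i v)) with (Ld i * sigma i); [exact Hub|].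
    rewrite <- (Rmult_1_r (Ld i * sigma i)) at 1. rewrite <- Hs2. ring.
Qed.

Lemma Ld_nonneg i : (i < M)%nat -> 0 <= Ld i.
Proof.
  intros Hi. pose proof (Hsig i Hi). destruct (HLd i Hi) as [Hub _].
  assert (H0 : opnorm_set n p q blk rA rC E A C i 0).
  { exists (fun _ => 0). split.
    - unfold normsq_blk. rewrite fsum_eq0; [lra|]. intros; destruct (Nat.eqb _ _); ring.
    - symmetry. apply fsum_eq0; intros. destruct (E _ _); [|reflexivity].
      rewrite fsum_eq0; [ring|]. intros; destruct (Nat.eqb _ _); ring. }
  specialize (Hub 0 H0). destruct (Rle_dec 0 (Ld i)); auto. nra.
Qed.

(* the share of row [r] in [||B_i v_i||^2 / L_{d_i}], taken to be 0 when [L_{d_i} = 0] *)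
Definition block_weight (v : nat -> R) (r i : nat) : R :=
  if E (rowblk p rA rC r) i then
    (if Rlt_dec 0 (Ld i) then block_row v r i ^ 2 / Ld i else 0)
  else 0.

Lemma Gz_sq_le_weighted v r : (r < p + q)%nat ->
  Gz n p A C v r ^ 2 <= Wr r * fsum M (block_weight v r).
Proof.
  intros Hr. rewrite Gz_sum_block_rows. unfold Wd. apply fsum_sq_le_mul. intros i Hi.
  pose proof (Ld_nonneg i Hi). unfold block_weight.
  destruct (E (rowblk p rA rC r) i) eqn:HE;
    [|rewrite block_row_off_pattern by auto; repeat split; simpl; lra].
  destruct (Rlt_dec 0 (Ld i)) as [Hpos|Hz].
  - repeat split; [right; field; lra|lra|apply Rle_mult_inv_pos; [apply pow2_ge_0|lra]].
  - assert (HL0 : Ld i = 0) by lra.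
    assert (block_row v r i ^ 2 <= block_energy v i).
    { replace (block_row v r i ^ 2)
        with (if E (rowblk p rA rC r) i then block_row v r i ^ 2 else 0) by (rewrite HE; reflexivity).
      apply (fsum_term_le (p + q) (fun r => if E (rowblk p rA rC r) i then block_row v r i ^ 2 else 0));
        auto.
      intros r' Hr'; destruct (E (rowblk p rA rC r') i); [apply pow2_ge_0|lra]. }
    pose proof (block_energy_le v i Hi). rewrite HL0 in *. repeat split; lra.
Qed.

Lemma block_weight_sum_le v i : (i < M)%nat ->
  fsum (p + q) (fun r => block_weight v r i) <= sigma i * normsq_blk n blk i v.
Proof.
  intros Hi. pose proof (block_energy_le v i Hi). pose proof (Hsig i Hi).
  pose proof (normsq_blk_nonneg i v). unfold block_weight. destruct (Rlt_dec 0 (Ld i)) as [Hpos|Hz].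
  - rewrite (fsum_ext _ _ (fun r => (if E (rowblk p rA rC r) i then block_row v r i ^ 2 else 0) * / Ld i))
      by (intros; destruct (E _ _); unfold Rdiv; ring).
    rewrite fsum_scal_r. fold (block_energy v i).
    apply (Rmult_le_reg_r (Ld i)); [lra|]. rewrite Rmult_assoc, Rinv_l by lra. nra.
  - rewrite fsum_eq0 by (intros; destruct (E _ _); reflexivity). nra.
Qed.

(* The dual gradient is 1-Lipschitz in the W-norm. *)
Lemma Gz_sqnormWinv_le v : fsum (p + q) (fun r => Gz n p A C v r ^ 2 / Wr r) <= sigma_sqnorm v.
Proof.
  apply Rle_trans with (fsum (p + q) (fun r => fsum M (block_weight v r))).
  - apply fsum_le; intros r Hr. pose proof (HW r Hr). pose proof (Gz_sq_le_weighted v r Hr).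
    apply (Rmult_le_reg_l (Wr r)); [lra|].
    replace (Wr r * (Gz n p A C v r ^ 2 / Wr r)) with (Gz n p A C v r ^ 2) by (field; lra). exact H0.
  - rewrite fsum_swap, <- sigma_sqnorm_blocks. apply fsum_le; intros; apply block_weight_sum_le; auto.
Qed.

Definition sqnormW (x : nat -> R) : R := fsum (p + q) (fun r => Wr r * x r ^ 2).

Lemma sqnormW_nonneg x : 0 <= sqnormW x.
Proof. apply fsum_nonneg; intros r Hr. apply Rmult_le_pos; [apply Rlt_le, HW; auto|apply pow2_ge_0]. Qed.

Lemma sqnormW_sym x y : sqnormW (vsub x y) = sqnormW (vsub y x).
Proof. unfold sqnormW, vsub. apply fsum_ext; intros; ring. Qed.

Lemma lagr_shift z l l' : L z l' = L z l + fsum (p + q) (fun r => rs z r * (l' r - l r)).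
Proof.
  unfold lagr. rewrite (fsum_ext _ (fun r => l' r * rs z r) (fun r => l r * rs z r + rs z r * (l' r - l r)))
    by (intros; ring).
  rewrite fsum_plus. ring.
Qed.

Lemma dual_descent l l' z z' : argminL n p q M A C b c f l z ->
  L z l + fsum (p + q) (fun r => rs z r * (l' r - l r)) - 1/2 * sqnormW (vsub l' l) <= L z' l'.
Proof.
  intros Hz. rewrite (lagr_shift z' l l').
  pose proof (lagr_quadratic_growth l z z' Hz). pose proof (Gz_sqnormWinv_le (vsub z' z)).
  assert (Hlin : fsum (p + q) (fun r => rs z' r * (l' r - l r))
                 = fsum (p + q) (fun r => rs z r * (l' r - l r))
                   + fsum (p + q) (fun r => (l' r - l r) * Gz n p A C (vsub z' z) r)).
  { rewrite <- fsum_plus. apply fsum_ext; intros r Hr.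
    assert (rs z' r - rs z r = Gz n p A C (vsub z' z) r) by (rewrite resid_sub; reflexivity). nra. }
  assert (Hyoung : - (1/2 * sqnormW (vsub l' l)
                      + 1/2 * fsum (p + q) (fun r => Gz n p A C (vsub z' z) r ^ 2 / Wr r))
                   <= fsum (p + q) (fun r => (l' r - l r) * Gz n p A C (vsub z' z) r)).
  { unfold sqnormW. rewrite <- !fsum_scal, <- fsum_plus, <- fsum_opp. apply fsum_le; intros r Hr.
    pose proof (young_lb (vsub l' l r) (Gz n p A C (vsub z' z) r) _ (HW r Hr)). unfold vsub in *. lra. }
  lra.
Qed.

Lemma projD_inD x : inD p q (projD p x).
Proof. intros r Hr. unfold projD. destruct (Nat.ltb_spec r p); [lia|]. apply Rmax_l. Qed.

Lemma projD_obtuse x mu : inD p q mu ->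
  fsum (p + q) (fun r => Wr r * (x r - projD p x r) * (mu r - projD p x r)) <= 0.
Proof.
  intros Hmu. rewrite <- (fsum_eq0 (p + q) (fun _ => 0)) by auto.
  apply fsum_le; intros r Hr. pose proof (HW r Hr). unfold projD. destruct (Nat.ltb_spec r p).
  - rewrite Rminus_diag. lra.
  - specialize (Hmu r ltac:(lia)). unfold Rmax. destruct (Rle_dec 0 (x r)).
    + rewrite Rminus_diag. lra.
    + rewrite !Rminus_0_r. assert (x r * mu r <= 0) by nra.
      replace (Wr r * x r * mu r) with (Wr r * (x r * mu r)) by ring. nra.
Qed.

Lemma projD_isWproj x : isWproj p q M rA rC E Ld (inD p q) x (projD p x).
Proof.
  split; [apply projD_inD|]. intros y Hy. unfold normW. apply sqrt_le_1_alt.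
  apply fsum_le; intros r Hr. pose proof (HW r Hr). apply Rmult_le_compat_l; [lra|].
  unfold vsub, projD. destruct (Nat.ltb_spec r p).
  - rewrite Rminus_diag, pow_i by lia. apply pow2_ge_0.
  - specialize (Hy r ltac:(lia)). unfold Rmax. destruct (Rle_dec 0 (x r)).
    + rewrite Rminus_diag, pow_i by lia. apply pow2_ge_0.
    + rewrite Rminus_0_r. nra.
Qed.

(** ** The set of optimal multipliers *)

Hypothesis Hrank : forall nu : nat -> R,
  (forall col, (col < n)%nat -> fsum p (fun r => nu r * A r col) = 0) ->
  forall r, (r < p)%nat -> nu r = 0.
Hypothesis Hslater : exists zt : nat -> R,
  (forall r, (r < p)%nat -> fsum n (fun col => A r col * zt col) = b r) /\
  (forall r, (r < q)%nat -> fsum n (fun col => C r col * zt col) < c r).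

(* [v0] is the optimal dual value [f*], attained at [ls0]. *)
Variables (ls0 : nat -> R) (v0 : R).
Hypothesis Hls0 : inD p q ls0.
Hypothesis Hdv0 : dval n p q M A C b c f ls0 v0.
Hypothesis Hmax0 : forall l w, inD p q l -> dval n p q M A C b c f l w -> w <= v0.

Local Notation Lstar := (inLstar n p q M A C b c f).

Lemma ls0_Lstar : Lstar ls0.
Proof. split; auto. exists v0; split; auto. Qed.

Lemma Lstar_lagr_ge ls : Lstar ls -> forall z, v0 <= L z ls.
Proof. intros [HD [v [Hdv Hmx]]] z. apply Rle_trans with v; [apply Hmx with ls0; auto|apply Hdv]. Qed.

Lemma lagr_cv_multipliers z0 (u : nat -> nat -> R) l :
  (forall r, (r < p + q)%nat -> Un_cv (fun j => u j r) (l r)) -> Un_cv (fun j => L z0 (u j)) (L z0 l).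
Proof.
  intros Hl. unfold lagr. apply CV_plus; [apply Un_cv_const|].
  apply Un_cv_fsum. intros r Hr. apply CV_mult; [apply Hl; auto|apply Un_cv_const].
Qed.

Lemma Lstar_closed (u : nat -> nat -> R) l : (forall j, Lstar (u j)) ->
  (forall r, (r < p + q)%nat -> Un_cv (fun j => u j r) (l r)) -> Lstar l.
Proof.
  intros Hu Hl. split.
  - intros r Hr. apply (Rle_cv_lim (Un := fun _ => 0) (Vn := fun j => u j r));
      [intros j; apply (proj1 (Hu j)); auto|apply Un_cv_const|apply Hl; lia].
  - destruct (argminL_exists l) as [zl Hzl]. exists (L zl l). split.
    + split; [exists zl; auto|]. intros z'; apply Hzl.
    + intros l' w Hl' Hw. apply Rle_trans with v0; [apply Hmax0 with l'; auto|].
      apply (Rle_cv_lim (Un := fun _ => v0) (Vn := fun j => L zl (u j)));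
        [intros j; apply Lstar_lagr_ge; auto|apply Un_cv_const|apply lagr_cv_multipliers; auto].
Qed.

Lemma resid_eq_row w r : (r < p)%nat -> rs w r = fsum n (fun col => A r col * w col) - b r.
Proof. intros Hr. unfold resid, Gz, Gm, gv. destruct (Nat.ltb_spec r p); [reflexivity|lia]. Qed.

Lemma resid_ineq_row w j : rs w (p + j)%nat = fsum n (fun col => C j col * w col) - c j.
Proof.
  unfold resid, Gz, Gm, gv. destruct (Nat.ltb_spec (p + j) p); [lia|].
  replace (p + j - p)%nat with j by lia. reflexivity.
Qed.

Lemma lagr_split w l : L w l = fsep M f w + fsum p (fun r => l r * rs w r)
  + fsum q (fun j => l (p + j)%nat * (fsum n (fun col => C j col * w col) - c j)).
Proof.
  unfold lagr. rewrite fsum_app, Rplus_assoc. do 2 f_equal.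
  apply fsum_ext; intros j Hj. rewrite resid_ineq_row. reflexivity.
Qed.

Definition slater_bound (zt : nat -> R) (j : nat) : R :=
  (fsep M f zt - v0) / (c j - fsum n (fun col => C j col * zt col)).

Lemma Lstar_ineq_mult_le zt :
  (forall r, (r < p)%nat -> fsum n (fun col => A r col * zt col) = b r) ->
  (forall j, (j < q)%nat -> fsum n (fun col => C j col * zt col) < c j) ->
  forall ls, Lstar ls -> forall j, (j < q)%nat -> 0 <= ls (p + j)%nat <= slater_bound zt j.
Proof.
  intros Hzt1 Hzt2 ls Hls j Hj.
  set (slack := fun j => c j - fsum n (fun col => C j col * zt col)).
  assert (Hslack : forall j, (j < q)%nat -> 0 < slack j) by (intros j' Hj'; unfold slack; specialize (Hzt2 j' Hj'); lra).
  assert (Hnn : forall j, (j < q)%nat -> 0 <= ls (p + j)%nat * slack j)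
    by (intros; apply Rmult_le_pos; [apply (proj1 Hls); lia|apply Rlt_le, Hslack; auto]).
  pose proof (fsum_term_le q (fun j => ls (p + j)%nat * slack j) j Hnn Hj) as Hterm.
  pose proof (Lstar_lagr_ge ls Hls zt) as H. rewrite lagr_split in H.
  rewrite fsum_eq0 in H by (intros r Hr; rewrite resid_eq_row, Hzt1 by auto; ring).
  rewrite (fsum_ext q _ (fun j => - (ls (p + j)%nat * slack j))), fsum_opp in H
    by (intros; unfold slack; ring).
  split; [apply (proj1 Hls); lia|]. specialize (Hslack j Hj).
  unfold slater_bound. fold (slack j). apply (Rmult_le_reg_r (slack j)); [lra|].
  unfold Rdiv. rewrite Rmult_assoc, Rinv_l by lra. lra.
Qed.

(* With [A h = e_r], testing [L(., ls) >= v0] at [zt -+ h] bounds [+-ls_r]. *)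
Lemma Lstar_eq_mult_bounded r : (r < p)%nat -> exists K, forall ls, Lstar ls -> Rabs (ls r) <= K.
Proof.
  intros Hr. destruct Hslater as [zt [Hzt1 Hzt2]].
  destruct (FullRowRank.indep_rows_hit_unit p n A Hrank r Hr) as [h Hh].
  set (zz := fun (t : R) col => zt col - t * h col).
  set (Ch := fun j => fsum n (fun col => C j col * h col)).
  exists (Rmax (fsep M f (zz 1)) (fsep M f (zz (-1))) - v0
          + fsum q (fun j => slater_bound zt j * Rabs (Ch j))).
  intros ls Hls.
  assert (Ht : forall t, t = 1 \/ t = -1 ->
            t * ls r <= Rmax (fsep M f (zz 1)) (fsep M f (zz (-1))) - v0
                        + fsum q (fun j => slater_bound zt j * Rabs (Ch j))).
  { intros t Ht. pose proof (Lstar_lagr_ge ls Hls (zz t)) as H. rewrite lagr_split in H.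
    assert (Heq : fsum p (fun s => ls s * rs (zz t) s) = - t * ls r).
    { rewrite <- (fsum_kronecker p r ls Hr), <- fsum_scal. apply fsum_ext; intros s Hs.
      rewrite resid_eq_row by auto. rewrite <- (Hzt1 s Hs), <- (Hh s Hs).
      rewrite (fsum_ext n _ (fun col => A s col * zt col - t * (A s col * h col))) by (intros; unfold zz; ring).
      rewrite fsum_minus, fsum_scal. ring. }
    assert (Hineq : fsum q (fun j => ls (p + j)%nat * (fsum n (fun col => C j col * zz t col) - c j))
                    <= fsum q (fun j => slater_bound zt j * Rabs (Ch j))).
    { apply fsum_le; intros j Hj. destruct (Lstar_ineq_mult_le zt Hzt1 Hzt2 ls Hls j Hj) as [Hm1 Hm2].
      rewrite (fsum_ext n _ (fun col => C j col * zt col - t * (C j col * h col))) by (intros; unfold zz; ring).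
      rewrite fsum_minus, fsum_scal. fold (Ch j). specialize (Hzt2 j Hj).
      assert (- t * Ch j <= Rabs (Ch j)).
      { pose proof (RRle_abs (Ch j)). pose proof (RRle_abs (- Ch j)). rewrite Rabs_Ropp in *.
        destruct Ht as [-> | ->]; lra. }
      apply Rle_trans with (ls (p + j)%nat * Rabs (Ch j)); [apply Rmult_le_compat_l; lra|].
      apply Rmult_le_compat_r; [apply Rabs_pos|exact Hm2]. }
    assert (fsep M f (zz t) <= Rmax (fsep M f (zz 1)) (fsep M f (zz (-1))))
      by (destruct Ht as [-> | ->]; [apply Rmax_l|apply Rmax_r]).
    lra. }
  destruct (Rcase_abs (ls r)).
  - rewrite Rabs_left by assumption. specialize (Ht (-1) (or_intror eq_refl)). lra.
  - rewrite Rabs_right by assumption. specialize (Ht 1 (or_introl eq_refl)). lra.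
Qed.

Lemma Lstar_bounded : exists K : nat -> R,
  forall ls, Lstar ls -> forall r, (r < p + q)%nat -> Rabs (ls r) <= K r.
Proof.
  destruct Hslater as [zt [Hzt1 Hzt2]].
  assert (Hcoord : forall r, exists K, (r < p + q)%nat -> forall ls, Lstar ls -> Rabs (ls r) <= K).
  { intros r. destruct (Compare_dec.lt_dec r p) as [Hr|Hr].
    - destruct (Lstar_eq_mult_bounded r Hr) as [K HK]. eauto.
    - exists (slater_bound zt (r - p)). intros Hrq ls Hls.
      destruct (Lstar_ineq_mult_le zt Hzt1 Hzt2 ls Hls (r - p) ltac:(lia)).
      replace (p + (r - p))%nat with r in * by lia. rewrite Rabs_right by lra. assumption. }
  exists (fun r => proj1_sig (constructive_indefinite_description _ (Hcoord r))).
  intros ls Hls r Hr. destruct constructive_indefinite_description as [K HK]. auto.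
Qed.

Local Notation normW := (normW p q M rA rC E Ld).

Lemma normW_sym x y : normW (vsub x y) = normW (vsub y x).
Proof. unfold normW. f_equal. apply sqnormW_sym. Qed.

Lemma normW_cv (u : nat -> nat -> R) l x : (forall r, (r < p + q)%nat -> Un_cv (fun j => u j r) (l r)) ->
  Un_cv (fun j => normW (vsub (u j) x)) (normW (vsub l x)).
Proof.
  intros Hl. unfold normW. apply continuity_seq; [apply continuity_pt_sqrt, sqnormW_nonneg|].
  apply Un_cv_fsum. intros r Hr. apply CV_mult; [apply Un_cv_const|].
  apply (continuity_seq (fun t => (t - x r) ^ 2) (fun j => u j r)); [reg|apply Hl; auto].
Qed.

Lemma distLstar_has_max l : exists T, is_max (distLstar n p q M rA rC E A C b c Ld f l) T.
Proof.
  destruct Lstar_bounded as [K HK].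
  destruct (closed_bounded_attains_max (p + q) Lstar (fun x => normW (vsub x l)) K
              (sqrt (fsum (p + q) (fun r => Wr r * (K r + Rabs (l r)) ^ 2)))) as [x [Hx Hmax]].
  - exists ls0. apply ls0_Lstar.
  - exact HK.
  - apply Lstar_closed.
  - intros u L' HL'. apply normW_cv. exact HL'.
  - intros x Hx. apply sqrt_le_1_alt. apply fsum_le; intros r Hr.
    apply Rmult_le_compat_l; [apply Rlt_le, HW; auto|]. apply pow_maj_Rabs. unfold vsub.
    pose proof (Rabs_triang (x r) (- l r)). rewrite Rabs_Ropp in H. specialize (HK x Hx r Hr).
    unfold Rminus. lra.
  - exists (normW (vsub x l)). split; [exists x; auto|]. intros w [ls [Hls ->]]. auto.
Qed.

Lemma Lstar_has_Wproj l : exists ls, isWproj p q M rA rC E Ld Lstar l ls.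
Proof.
  destruct Lstar_bounded as [K HK].
  destruct (closed_bounded_attains_max (p + q) Lstar (fun x => - normW (vsub x l)) K 0) as [x [Hx Hmax]].
  - exists ls0. apply ls0_Lstar.
  - exact HK.
  - apply Lstar_closed.
  - intros u L' HL'. apply CV_opp. apply normW_cv. exact HL'.
  - intros x Hx. assert (0 <= normW (vsub x l)) by apply sqrt_pos. lra.
  - exists x. split; auto. intros y Hy. specialize (Hmax y Hy). rewrite !(normW_sym l). lra.
Qed.

Variables (lam z : nat -> nat -> R).
Hypothesis Hl0 : inD p q (lam 0%nat).
Hypothesis Hz : forall k, argminL n p q M A C b c f (lam k) (z k).
Hypothesis Hlam : forall k, lam (S k) = projD p (vadd (lam k) (Winv p M rA rC E Ld (rs (z k)))).

Lemma lam_inD k : inD p q (lam k).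
Proof. destruct k; [exact Hl0|]. rewrite Hlam. apply projD_inD. Qed.

Definition dual_val (k : nat) : R := L (z k) (lam k).
Definition dg_step (k : nat) : nat -> R := vsub (lam (S k)) (lam k).
Definition dg_step_inner (k : nat) (ls : nat -> R) : R :=
  fsum (p + q) (fun r => Wr r * dg_step k r * (ls r - lam k r)).

Lemma dg_step_obtuse k mu : inD p q mu ->
  fsum (p + q) (fun r => (Wr r * (lam k r - lam (S k) r) + rs (z k) r) * (mu r - lam (S k) r)) <= 0.
Proof.
  intros Hmu. pose proof (projD_obtuse (vadd (lam k) (Winv p M rA rC E Ld (rs (z k)))) mu Hmu) as H.
  rewrite <- Hlam in H. eapply Rle_trans; [right|apply H]. apply fsum_ext; intros r Hr.
  pose proof (HW r Hr). unfold vadd, Winv. field. lra.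
Qed.

Lemma dual_val_le k : dual_val k <= v0.
Proof. apply Hmax0 with (lam k); [apply lam_inD|]. split; [exists (z k); auto|apply Hz]. Qed.

Lemma dual_ascent k : dual_val k + 1/2 * sqnormW (dg_step k) <= dual_val (S k).
Proof.
  pose proof (dual_descent (lam k) (lam (S k)) (z k) (z (S k)) (Hz k)).
  pose proof (dg_step_obtuse k (lam k) (lam_inD k)).
  assert (fsum (p + q) (fun r => (Wr r * (lam k r - lam (S k) r) + rs (z k) r) * (lam k r - lam (S k) r))
          = sqnormW (dg_step k) - fsum (p + q) (fun r => rs (z k) r * (lam (S k) r - lam k r))).
  { unfold sqnormW, dg_step. rewrite <- fsum_minus. apply fsum_ext; intros; unfold vsub; ring. }
  unfold dual_val, dg_step in *. lra.
Qed.

Lemma dual_gap_le_inner k ls : Lstar ls ->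
  v0 - dual_val (S k) <= dg_step_inner k ls - 1/2 * sqnormW (dg_step k).
Proof.
  intros Hls. pose proof (Lstar_lagr_ge ls Hls (z k)) as H. rewrite (lagr_shift (z k) (lam k) ls) in H.
  pose proof (dual_descent (lam k) (lam (S k)) (z k) (z (S k)) (Hz k)).
  pose proof (dg_step_obtuse k ls (proj1 Hls)).
  assert (fsum (p + q) (fun r => (Wr r * (lam k r - lam (S k) r) + rs (z k) r) * (ls r - lam (S k) r))
          = fsum (p + q) (fun r => rs (z k) r * (ls r - lam k r))
            - fsum (p + q) (fun r => rs (z k) r * (lam (S k) r - lam k r))
            + sqnormW (dg_step k) - dg_step_inner k ls).
  { unfold sqnormW, dg_step_inner. rewrite <- !fsum_minus, <- fsum_plus, <- fsum_minus.
    apply fsum_ext; intros; unfold dg_step, vsub; ring. }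
  unfold dual_val, dg_step in *. lra.
Qed.

Lemma dg_step_inner_identity k ls : dg_step_inner k ls - 1/2 * sqnormW (dg_step k)
  = 1/2 * (sqnormW (vsub ls (lam k)) - sqnormW (vsub ls (lam (S k)))).
Proof.
  unfold dg_step_inner, sqnormW. rewrite <- fsum_minus, <- fsum_scal, <- fsum_scal, <- fsum_minus.
  apply fsum_ext; intros; unfold dg_step, vsub. field.
Qed.

Lemma fejer_monotone k ls : Lstar ls -> sqnormW (vsub ls (lam (S k))) <= sqnormW (vsub ls (lam k)).
Proof.
  intros Hls. pose proof (dual_gap_le_inner k ls Hls). rewrite dg_step_inner_identity in H.
  pose proof (dual_val_le (S k)). lra.
Qed.

Lemma fejer_from_start k ls : Lstar ls -> sqnormW (vsub ls (lam k)) <= sqnormW (vsub ls (lam 0)).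
Proof. intros Hls. induction k; [lra|]. pose proof (fejer_monotone k ls Hls). lra. Qed.

Lemma dual_gap_first ls : Lstar ls -> v0 - dual_val 1 <= 1/2 * sqnormW (vsub ls (lam 0)).
Proof.
  intros Hls. pose proof (dual_gap_le_inner 0 ls Hls). rewrite dg_step_inner_identity in H.
  pose proof (sqnormW_nonneg (vsub ls (lam 1))). lra.
Qed.

Lemma dg_step_inner_le k ls kb : 0 <= kb -> sqnormW (vsub ls (lam k)) <= kb ^ 2 * sqnormW (dg_step k) ->
  dg_step_inner k ls <= kb * sqnormW (dg_step k).
Proof.
  intros Hkb Hb. pose proof (sqnormW_nonneg (dg_step k)).
  pose proof (fsum_cauchy_schwarz (p + q) Wr (dg_step k) (fun r => ls r - lam k r)
                (fun r Hr => Rlt_le _ _ (HW r Hr))) as Hcs.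
  apply le_of_pow2_le; [nra|]. eapply Rle_trans; [apply Hcs|].
  replace ((kb * sqnormW (dg_step k)) ^ 2) with (sqnormW (dg_step k) * (kb ^ 2 * sqnormW (dg_step k)))
    by ring.
  apply Rmult_le_compat_l; auto.
Qed.

Lemma resid_projD_le_step k :
  fsum (p + q) (fun r => projD p (rs (z k)) r ^ 2 / Wr r) <= sqnormW (dg_step k).
Proof.
  apply fsum_le; intros r Hr. pose proof (HW r Hr). unfold dg_step, vsub. rewrite (Hlam k).
  unfold projD, vadd, Winv. destruct (Nat.ltb_spec r p).
  - right. field. lra.
  - pose proof (lam_inD k r ltac:(lia)). unfold Rmax.
    destruct (Rle_dec 0 (rs (z k) r)) as [Hp|Hp].
    + destruct (Rle_dec 0 (lam k r + rs (z k) r / Wr r)) as [Hq|Hq]; [right; field; lra|].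
      exfalso. apply Hq. apply Rplus_le_le_0_compat; [lra|apply Rle_mult_inv_pos; lra].
    + unfold Rdiv at 1. rewrite pow_i, Rmult_0_l by lia. apply Rmult_le_pos; [lra|apply pow2_ge_0].
Qed.

(** ** Linear rate under the error bound *)

Variable kbar : R.
Hypothesis Hkbar0 : 0 <= kbar.
Hypothesis Hkbar : forall l, inD p q l ->
  forall Tl T0, is_max (distLstar n p q M rA rC E A C b c Ld f l) Tl ->
  is_max (distLstar n p q M rA rC E A C b c Ld f (lam 0%nat)) T0 -> Tl <= T0 ->
  forall zl, argminL n p q M A C b c f l zl ->
  forall pD, isWproj p q M rA rC E Ld (inD p q) (vadd l (Winv p M rA rC E Ld (rs zl))) pD ->
  forall pS, isWproj p q M rA rC E Ld Lstar l pS ->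
  normW (vsub l pS) <= kbar * normW (vsub pD l).

Definition rate : R := 4 * (1 + kbar) / (1 + 4 * (1 + kbar)).

Lemma rate_pos : 0 < rate.
Proof. unfold rate. apply Rdiv_lt_0_compat; lra. Qed.

Lemma rate_le_1 : rate <= 1.
Proof.
  unfold rate. apply (Rmult_le_reg_r (1 + 4 * (1 + kbar))); [lra|].
  unfold Rdiv. rewrite Rmult_assoc, Rinv_l by lra. lra.
Qed.

(* Fejer monotonicity keeps every iterate where the error bound is assumed to hold. *)
Lemma lam_error_bound k : exists ls, Lstar ls /\
  sqnormW (vsub ls (lam k)) <= kbar ^ 2 * sqnormW (dg_step k).
Proof.
  destruct (distLstar_has_max (lam k)) as [Tk HTk]. destruct (distLstar_has_max (lam 0)) as [T0 HT0].
  destruct (Lstar_has_Wproj (lam k)) as [pS HpS].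
  assert (Hle : Tk <= T0).
  { destruct HTk as [[ls [Hls ->]] _]. destruct HT0 as [_ HT0].
    eapply Rle_trans; [|apply HT0; exists ls; split; eauto].
    apply sqrt_le_1_alt, fejer_from_start, Hls. }
  assert (HpD : isWproj p q M rA rC E Ld (inD p q)
                  (vadd (lam k) (Winv p M rA rC E Ld (rs (z k)))) (lam (S k)))
    by (rewrite (Hlam k); apply projD_isWproj).
  pose proof (Hkbar (lam k) (lam_inD k) Tk T0 HTk HT0 Hle (z k) (Hz k) (lam (S k)) HpD pS HpS) as HK.
  change (sqrt (sqnormW (vsub (lam k) pS)) <= kbar * sqrt (sqnormW (dg_step k))) in HK.
  exists pS. split; [apply HpS|]. rewrite sqnormW_sym.
  rewrite <- (pow2_sqrt (sqnormW (vsub (lam k) pS))), <- (pow2_sqrt (sqnormW (dg_step k)))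
    by apply sqnormW_nonneg.
  rewrite <- Rpow_mult_distr. apply pow_incr. split; [apply sqrt_pos|exact HK].
Qed.

(* With [e_k = v0 - d(lam k)]: [e_{k+1} <= 2 kbar (e_k - e_{k+1})], a fortiori with [4 (1 + kbar)]. *)
Lemma dual_gap_contraction k : v0 - dual_val (S k) <= rate * (v0 - dual_val k).
Proof.
  destruct (lam_error_bound k) as [ls [Hls Hb]].
  pose proof (dual_gap_le_inner k ls Hls). pose proof (dg_step_inner_le k ls kbar Hkbar0 Hb).
  pose proof (dual_ascent k). pose proof (dual_val_le (S k)). pose proof (sqnormW_nonneg (dg_step k)).
  assert (Hrec : (v0 - dual_val (S k)) * (1 + 4 * (1 + kbar)) <= 4 * (1 + kbar) * (v0 - dual_val k))
    by nra.
  unfold rate. apply (Rmult_le_reg_r (1 + 4 * (1 + kbar))); [lra|].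
  replace (4 * (1 + kbar) / (1 + 4 * (1 + kbar)) * (v0 - dual_val k) * (1 + 4 * (1 + kbar)))
    with (4 * (1 + kbar) * (v0 - dual_val k)) by (field; lra).
  exact Hrec.
Qed.

Lemma dual_gap_geometric k : (1 <= k)%nat -> v0 - dual_val k <= rate ^ (k - 1) * (v0 - dual_val 1).
Proof.
  induction k as [|k IH]; intros Hk; [lia|]. destruct k; [simpl; lra|].
  specialize (IH ltac:(lia)). replace (S k - 1)%nat with k in IH by lia.
  replace (S (S k) - 1)%nat with (S k) by lia. simpl pow.
  pose proof (dual_gap_contraction (S k)). pose proof rate_pos.
  apply Rle_trans with (rate * (v0 - dual_val (S k))); [assumption|].
  rewrite Rmult_assoc. apply Rmult_le_compat_l; [lra|exact IH].
Qed.

Lemma resid_rate k : (1 <= k)%nat ->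
  normWinv p q M rA rC E Ld (projD p (rs (z k)))
  <= Rpower rate ((INR k - 2) / 2) * normW (vsub ls0 (lam 0)).
Proof.
  intros Hk. pose proof rate_pos.
  pose proof (dual_gap_geometric k Hk). pose proof (dual_gap_first ls0 ls0_Lstar).
  pose proof (dual_ascent k). pose proof (dual_val_le (S k)). pose proof (resid_projD_le_step k).
  pose proof (pow_pred_Rpower_half rate k rate_pos Hk) as Hpow.
  set (X := Rpower rate ((INR k - 2) / 2)) in *.
  assert (HX : 0 < X) by (unfold X, Rpower; apply exp_pos).
  assert (HR0 : normW (vsub ls0 (lam 0)) ^ 2 = sqnormW (vsub ls0 (lam 0)))
    by (apply pow2_sqrt, sqnormW_nonneg).
  assert (Hres : 0 <= fsum (p + q) (fun r => projD p (rs (z k)) r ^ 2 / Wr r))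
    by (apply fsum_nonneg; intros r Hr; apply Rle_mult_inv_pos; [apply pow2_ge_0|apply HW; auto]).
  apply le_of_pow2_le; [apply Rmult_le_pos; [lra|apply sqrt_pos]|].
  unfold normWinv. rewrite pow2_sqrt by exact Hres.
  rewrite Rpow_mult_distr, HR0.
  assert (0 <= rate ^ (k - 1)) by (apply pow_le; lra).
  assert (rate ^ (k - 1) <= X ^ 2) by (rewrite Hpow; pose proof rate_le_1; nra).
  pose proof (sqnormW_nonneg (vsub ls0 (lam 0))). nra.
Qed.

End DualGradient.

Theorem theorem3
  (n p q M Mbar : nat) (blk rA rC : nat -> nat) (E : nat -> nat -> bool)
  (A C : nat -> nat -> R) (b c : nat -> R)
  (f : nat -> (nat -> R) -> R) (gf : nat -> (nat -> R) -> (nat -> R))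
  (sigma Lf Ld : nat -> R)
  (Hblk : forall col, (col < n)%nat -> (blk col < M)%nat)
  (HrA : forall r, (r < p)%nat -> (rA r < Mbar)%nat)
  (HrC : forall r, (r < q)%nat -> (rC r < Mbar)%nat)
  (HEA : forall r col, (r < p)%nat -> (col < n)%nat ->
           E (rA r) (blk col) = false -> A r col = 0)
  (HEC : forall r col, (r < q)%nat -> (col < n)%nat ->
           E (rC r) (blk col) = false -> C r col = 0)
  (Hloc : forall i x y, (i < M)%nat -> sameblk n blk i x y -> f i x = f i y)
  (Hsig : forall i, (i < M)%nat -> 0 < sigma i)
  (Hsc : forall i x y t, (i < M)%nat -> 0 <= t <= 1 ->
      f i (vadd (vscal t x) (vscal (1 - t) y))
      <= t * f i x + (1 - t) * f i y
         - sigma i / 2 * t * (1 - t) * normsq_blk n blk i (vsub x y))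
  (Hgrad : forall i x d, (i < M)%nat ->
      derivable_pt_lim (fun t => f i (vadd x (vscal t d))) 0
        (fsum n (fun col => if Nat.eqb (blk col) i then gf i x col * d col else 0)))
  (Hlip : forall i x y, (i < M)%nat ->
      sqrt (normsq_blk n blk i (vsub (gf i x) (gf i y)))
      <= Lf i * sqrt (normsq_blk n blk i (vsub x y)))
  (Hrank : forall nu : nat -> R,
      (forall col, (col < n)%nat -> fsum p (fun r => nu r * A r col) = 0) ->
      forall r, (r < p)%nat -> nu r = 0)
  (Hslater : exists zt : nat -> R,
      (forall r, (r < p)%nat -> fsum n (fun col => A r col * zt col) = b r) /\
      (forall r, (r < q)%nat -> fsum n (fun col => C r col * zt col) < c r))
  (HLd : forall i, (i < M)%nat -> is_lub (opnorm_set n p q blk rA rC E A C i) (Ld i * sigma i))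
  (HW : forall r, (r < p + q)%nat -> 0 < Wd p M rA rC E Ld r)
  (lam z : nat -> nat -> R)
  (Hl0 : inD p q (lam 0%nat))
  (Hz : forall k, argminL n p q M A C b c f (lam k) (z k))
  (Hlam : forall k, lam (S k) =
      projD p (vadd (lam k) (Winv p M rA rC E Ld (resid n p A C b c (z k)))))
  (kbar : R) (Hkbar0 : 0 <= kbar)
  (Hkbar : forall l, inD p q l ->
      forall Tl T0, is_max (distLstar n p q M rA rC E A C b c Ld f l) Tl ->
      is_max (distLstar n p q M rA rC E A C b c Ld f (lam 0%nat)) T0 -> Tl <= T0 ->
      forall zl, argminL n p q M A C b c f l zl ->
      forall pD, isWproj p q M rA rC E Ld (inD p q)
                   (vadd l (Winv p M rA rC E Ld (resid n p A C b c zl))) pD ->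
      forall pS, isWproj p q M rA rC E Ld (inLstar n p q M A C b c f) l pS ->
      normW p q M rA rC E Ld (vsub l pS) <= kbar * normW p q M rA rC E Ld (vsub pD l)) :
  forall R0, is_min (distLstar n p q M rA rC E A C b c Ld f (lam 0%nat)) R0 ->
  forall k, (1 <= k)%nat ->
    normWinv p q M rA rC E Ld (projD p (resid n p A C b c (z k)))
    <= Rpower (4 * (1 + kbar) / (1 + 4 * (1 + kbar))) ((INR k - 2) / 2) * R0.
Proof.
  intros R0 [[ls [[Hls [v [Hdv Hmax]]] ->]] _] k Hk.
  exact (resid_rate n p q M blk rA rC E A C b c f gf sigma Ld Hblk Hsig Hsc Hgrad HEA HEC HLd HW
           Hrank Hslater ls v Hls Hdv Hmax lam z Hl0 Hz Hlam kbar Hkbar0 Hkbar k Hk).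
Qed.
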